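(* Let $p$ be an indecomposable permutation avoiding $3241$ and $4321$ that contains the pattern $321$, with associated triple $(a,b,c)$. Then there is an entry $w$ of $p$ such that $w\,b\,a$ is an occurrence of $321$ in $p$ (i.e. $w$ lies to the left of $b$ and $w>b$).
   Context: Permutations of $[n]$ are in one-line notation; pattern containment/avoidance is in the usual classical sense. Indecomposable: no $k$ with $1\le k\le n-1$ and $\{p_1,\dots,p_k\}=\{1,\dots,k\}$. An entry is a left-to-right maximum (LRMax) if it exceeds all entries to its left. For a $321$-containing permutation $p$, the associated triple $(a,b,c)$ is: $a$ is the rightmost entry of $p$ that plays the role of the ''1'' in some occurrence of $321$; $b$ is the rightmost entry to the left of $a$ that exceeds $a$; $c$ is the first entry to the right of $a$ that is not a LRMax, with $c=\infty$ if no such entry exists. *)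

From mathcomp Require Import all_boot.
Set Implicit Arguments.
Unset Strict Implicit.
Unset Printing Implicit Defensive.

(* Permutations of [n] in one-line notation, as sequences of naturals.
   Positions are 0-based; entries are values in 1..n. *)
Definition entry (p : seq nat) (i : nat) : nat := nth 0 p i.

Definition is_perm (p : seq nat) : Prop := perm_eq p (iota 1 (size p)).

Definition contains (p q : seq nat) : Prop :=
  exists idx : seq nat,
    [/\ size idx = size q, sorted ltn idx, all (fun i => i < size p) idx &
        forall i j, i < size q -> j < size q ->
          (entry p (nth 0 idx i) < entry p (nth 0 idx j)) = (nth 0 q i < nth 0 q j)].

Definition avoids (p q : seq nat) : Prop := ~ contains p q.

Definition indecomposable (p : seq nat) : Prop :=
  forall k, 1 <= k <= (size p).-1 ->
    ~ (forall x, (x \in take k p) = (x \in iota 1 k)).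

Definition role1_of_321 (p : seq nat) (j : nat) : Prop :=
  exists i1 i2, [/\ i1 < i2, i2 < j, j < size p,
                    entry p i1 > entry p i2 & entry p i2 > entry p j].

Definition is_LRMax (p : seq nat) (j : nat) : Prop :=
  forall i, i < j -> entry p i < entry p j.

(* associated triple (a,b,c), given by positions ia, ib and
   ic = Some position of c, or None for c = infinity *)
Definition assoc_triple (p : seq nat) (ia ib : nat) (ic : option nat) : Prop :=
  [/\
      role1_of_321 p ia /\ (forall j, role1_of_321 p j -> j <= ia),
      [/\ ib < ia, entry p ib > entry p ia &
          forall i, i < ia -> entry p i > entry p ia -> i <= ib] &
      match ic with
      | Some jc => [/\ ia < jc, jc < size p, ~ is_LRMax p jc &
                     forall j, ia < j < jc -> is_LRMax p j]
      | None => forall j, ia < j < size p -> is_LRMax p j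
      end].

From mathcomp Require Import all_boot.
From mathcomp Require Import zify.

(* Let x y a be a 321 whose "1" is a.  The entry y exceeds a and lies left
   of it, so y is weakly left of b by the choice of b.  If x > b we are done
   with w = x.  Otherwise x < b, hence y < x < b, so y lies strictly left of
   b and x y b a is an occurrence of 3241, which p avoids. *)

Lemma perm_entry_inj {p : seq nat} {i j : nat} :
  is_perm p -> i < size p -> j < size p -> entry p i = entry p j -> i = j.
Proof.
move=> Hp hi hj Eij; have huniq : uniq p by rewrite (perm_uniq Hp) iota_uniq.
by apply/eqP; rewrite -(nth_uniq 0 hi hj huniq); apply/eqP.
Qed.

Lemma contains_3241 {p : seq nat} {i1 i2 i3 i4 : nat} :
  i1 < i2 -> i2 < i3 -> i3 < i4 -> i4 < size p ->
  entry p i4 < entry p i2 -> entry p i2 < entry p i1 ->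
  entry p i1 < entry p i3 ->
  contains p [:: 3; 2; 4; 1].
Proof.
move=> h12 h23 h34 h4 e42 e21 e13.
exists [:: i1; i2; i3; i4]; split => //=.
- by rewrite h12 h23 h34.
- by rewrite h4 !andbT; apply/and3P; split; lia.
- move=> i j hi hj.
  by case: i hi => [|[|[|[|i]]]] hi //; case: j hj => [|[|[|[|j]]]] hj //=; lia.
Qed.

Theorem proposition4 (p : seq nat) (ia ib : nat) (ic : option nat) :
  is_perm p -> indecomposable p ->
  avoids p [:: 3; 2; 4; 1] -> avoids p [:: 4; 3; 2; 1] ->
  contains p [:: 3; 2; 1] ->
  assoc_triple p ia ib ic ->
  exists iw, iw < ib /\ entry p iw > entry p ib.
Proof.
move=> Hp _ avoid3241 _ _ [[[ix [iy [hxy hya hap hyx hay]]] _] [hba _ hbmax] _].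
have hyb : iy <= ib by apply: hbmax => //; apply: ltn_trans hay.
have hxb : ix < ib by apply: leq_trans hyb.
have [hbx | hxb_le] := ltnP (entry p ib) (entry p ix); first by exists ix.
have hxb_lt : entry p ix < entry p ib.
  rewrite ltn_neqAle hxb_le andbT; apply/eqP => E.
  have hbp : ib < size p by apply: ltn_trans hap.
  by move: (hxb); rewrite (perm_entry_inj Hp (ltn_trans hxb hbp) hbp E) ltnn.
have hyb_lt : iy < ib.
  by rewrite ltn_neqAle hyb andbT; apply/eqP => E; move: hyx; rewrite E; lia.
by case: avoid3241; apply: (contains_3241 hxy hyb_lt hba hap hay hyx hxb_lt).
Qed.
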